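(* Let $N\ge1$, $n\ge1$, $\beta>0$ real, and let $X^{(\beta,N)}_k$ ($k\in\mathcal L^{(1)}_n$) and $T^{(1)}_{ab}(\beta)$ be as in the context. Then: (i) for each $a=1,\dots,N$, $T^{(1)}_{aa}(\beta)X^{(\beta,N)}_k=\#\{i:\underline{k_i}=a\}\,X^{(\beta,N)}_k$; (ii) with $D=z_1\partial_{z_1}+\dots+z_n\partial_{z_n}$, $DX^{(\beta,N)}_k=|\overline{k}|\,X^{(\beta,N)}_k$, where $|\overline k|=\overline{k_1}+\dots+\overline{k_n}$.
   Context: For $k\in\mathbb Z$, $\underline{k}\in\{1,\dots,N\}$, $\overline{k}\in\mathbb Z$ unique with $k=\underline{k}-N\overline{k}$ (componentwise on sequences). Dominance order on $\mathbb Z^n$: distinct $k>l$ iff $\sum k_i=\sum l_i$ and $k_1+\dots+k_i\ge l_1+\dots+l_i$ for all $i$. $\mathcal L^{(1)}_n$ = strictly decreasing sequences in $\mathbb Z^n$. $V=\mathbb C^N$ (basis $v_a$, matrix units $E_{ab}$, $E^{(i)}_{ab}$ acting on the $i$-th factor of $V^{\otimes n}$). On $\mathbb C[z_1^{\pm1},\dots,z_n^{\pm1}]\otimes V^{\otimes n}$, $K_{ij}$ swaps $z_i,z_j$, $P_{ij}$ swaps factors $i,j$; $F_{N,n}=\{f:K_{ij}f=-P_{ij}f\}$, with basis $\hat u_k=\sum_{w\in S_n}\mathrm{sign}(w)z_1^{\overline{k_{w(1)}}}\cdots z_n^{\overline{k_{w(n)}}}\otimes v_{\underline{k_{w(1)}}}\otimes\cdots\otimes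 v_{\underline{k_{w(n)}}}$, $k\in\mathcal L^{(1)}_n$. $Y(\mathfrak{gl}_N)$ is generated by the coefficients of $T_{ab}(u)=\delta_{ab}+\sum_sT^{(s)}_{ab}u^{-s}$ with $(u-v)[T_{ab}(u),T_{cd}(v)]=T_{cb}(v)T_{ad}(u)-T_{cb}(u)T_{ad}(v)$; $A_m(u)=\sum_{w\in S_m}\mathrm{sign}(w)T_{1w(1)}(u)\cdots T_{mw(m)}(u-m+1)$. Let $d_i(\beta)=\beta^{-1}z_i\partial_{z_i}+n-i+\sum_{j>i}\frac{z_j}{z_j-z_i}(K_{ij}-1)-\sum_{j<i}\frac{z_i}{z_i-z_j}(K_{ij}-1)$, $L^{(i)}_{ab}(u)=\delta_{ab}+(u+d_i(\beta))^{-1}E^{(i)}_{ba}$ (expanded in $u^{-1}$) and $T_{ab}(u;\beta)=\sum_cL^{(1)}_{ac_1}(u)\cdots L^{(n)}_{c_{n-1}b}(u)$; this defines a $Y(\mathfrak{gl}_N)$-action on $F_{N,n}$, $A_m(u;\beta)$ is the image of $A_m(u)$, and $T^{(1)}_{ab}(\beta)$ is the coefficient of $u^{-1}$ in $T_{ab}(u;\beta)$ (equal to $\sum_iE^{(i)}_{ba}$). For $k\in\mathcal L^{(1)}_n$, $X^{(\beta,N)}_k$ is the unique common eigenvector of all coefficients of $A_1(u;\beta),\dots,A_N(u;\beta)$ of the form $\hat u_k+\sum_{l\in\mathcal L^{(1)}_n,\,l<k}c_{kl}\hat u_l$. *)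

From mathcomp Require Import all_boot all_order all_algebra all_fingroup.
From mathcomp Require Import complex.
From mathcomp Require Import Rstruct.
From mathcomp.multinomials Require Import monalg.

Set Implicit Arguments.
Unset Strict Implicit.
Unset Printing Implicit Defensive.

Import Order.TTheory GRing.Theory Num.Theory.
Local Open Scope ring_scope.

Definition RR : Type := Rdefinitions.R.
Definition CC : Type := RR[i].
Definition ofR (x : RR) : CC := Complex x 0.

(* The space C[z_1^{+-1},...,z_n^{+-1}] (x) V^{(x) n}, V = C^N.
   A basis element z^m (x) v_{c_1+1} (x) ... (x) v_{c_n+1} is indexed by
   (m, c) with m : 'I_n -> int (exponents) and c : 'I_n -> 'I_N
   (colours, 0-based: colour c stands for the basis vector v_{c+1}).            *)
Definition expo (n : nat) := {ffun 'I_n -> int}.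
Definition colr (N n : nat) := {ffun 'I_n -> 'I_N}.
Definition Kidx (N n : nat) := (expo n * colr N n)%type.
Definition Sp (N n : nat) := {malg CC[Kidx N n]}.

Definition lext (N n : nat) (phi : Kidx N n -> Sp N n) (f : Sp N n) : Sp N n :=
  \sum_(k <- finmap.enum_fset (msupp f)) f@_k *: phi k.

Definition setf (T : Type) (n : nat) (m : {ffun 'I_n -> T}) (i : 'I_n) (x : T)
  : {ffun 'I_n -> T} := [ffun j => if j == i then x else m j].

Definition swapf (T : Type) (n : nat) (m : {ffun 'I_n -> T}) (i j : 'I_n)
  : {ffun 'I_n -> T} := [ffun l => m (tperm i j l)].

Definition zdz (N n : nat) (i : 'I_n) : Sp N n -> Sp N n :=
  lext (fun k => (k.1 i)%:~R *: << k >>).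

Definition Kop (N n : nat) (i j : 'I_n) : Sp N n -> Sp N n :=
  lext (fun k => << (swapf k.1 i j, k.2) >>).

Definition Pop (N n : nat) (i j : 'I_n) : Sp N n -> Sp N n :=
  lext (fun k => << (k.1, swapf k.2 i j) >>).

Definition Eop (N n : nat) (i : 'I_n) (a b : 'I_N) : Sp N n -> Sp N n :=
  lext (fun k => if k.2 i == b then << (k.1, setf k.2 i a) >> else 0).

(* Qop a b = z_a/(z_a - z_b) (K_{ab} - 1)  (for a <> b), computed on
   monomials: with p = exponent of z_a, q = exponent of z_b,
   (z_a^q z_b^p - z_a^p z_b^q)/(z_a - z_b)
     = sgn * sum_{r < |p-q|} z_a^{min(p,q)+r} z_b^{max(p,q)-1-r},
   sgn = 1 if p < q, -1 otherwise; then multiplied by z_a.            *)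
Definition Qop (N n : nat) (a b : 'I_n) : Sp N n -> Sp N n :=
  lext (fun k =>
    let p := k.1 a in let q := k.1 b in
    let lo := Num.min p q in let hi := Num.max p q in
    (if p < q then 1 else -1) *:
      \sum_(r < absz (p - q))
         << (setf (setf k.1 a (lo + r%:Z + 1)) b (hi - 1 - r%:Z), k.2) >>).

(* d_i(beta), i 0-based (paper's index i+1, so n - (i+1) in the constant) *)
Definition dop (N n : nat) (beta : RR) (i : 'I_n) (f : Sp N n) : Sp N n :=
  ofR (beta^-1) *: zdz i f + (n - i.+1)%:R *: f
  + \sum_(j : 'I_n | (i < j)%N) Qop j i f
  - \sum_(j : 'I_n | (j < i)%N) Qop i j f.

(* Formal series in u^{-1} with operator coefficients:
   F s is the coefficient of u^{-s}. *)
Definition ser (N n : nat) := nat -> Sp N n -> Sp N n.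

Definition serone (N n : nat) : ser N n := fun s f => if s == 0%N then f else 0.
Definition serzero (N n : nat) : ser N n := fun _ _ => 0.
Definition sermul (N n : nat) (F G : ser N n) : ser N n :=
  fun s f => \sum_(r < s.+1) F r (G (s - r)%N f).

(* L^{(i)}_{ab}(u - c) = delta_ab + (u - c + d_i(beta))^{-1} E^{(i)}_{ba},
   (u + d)^{-1} = sum_{s >= 0} (-d)^s u^{-s-1}. *)
Definition Lser (N n : nat) (beta : RR) (c : nat) (i : 'I_n) (a b : 'I_N)
  : ser N n := fun s f =>
  match s with
  | 0%N => if a == b then f else 0
  | s'.+1 => iter s' (fun g => - (dop beta i g - c%:R *: g)) (Eop i b a f)
  end.

Definition mser (N n : nat) := 'I_N -> 'I_N -> ser N n.
Definition mmul (N n : nat) (X Y : mser N n) : mser N n :=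
  fun a b s f => \sum_(c : 'I_N) sermul (X a c) (Y c b) s f.
Definition mone (N n : nat) : mser N n :=
  fun a b => if a == b then @serone N n else @serzero N n.

Definition Tser (N n : nat) (beta : RR) (c : nat) : mser N n :=
  foldr (fun i acc => mmul (fun a b => Lser beta c i a b) acc) (@mone N n)
        (enum 'I_n).

Definition T1 (N n : nat) (beta : RR) (a b : 'I_N) : Sp N n -> Sp N n :=
  Tser beta 0 a b 1%N.

(* S_m is realised as the permutations of 'I_N fixing
   every colour >= m; colour r (0-based) is paired with shift r. *)
Definition Aser (N n : nat) (beta : RR) (m : nat) : ser N n :=
  fun s f =>
  \sum_(w : {perm 'I_N} | perm_on [set j : 'I_N | (j < m)%N] w)
     ((-1) ^+ odd_perm w) *:
     (foldr (fun (r : 'I_N) acc => sermul (Tser beta (nat_of_ord r) r (w r)) acc) (@serone N n)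
            [seq r : 'I_N <- enum 'I_N | (nat_of_ord r < m)%N]) s f.

(* underline / overline: k = (ul k + 1) - N * ol k, with ul k in {0..N-1}
   (0-based version of the paper's underline k in {1..N}). *)
Definition ul (N : nat) (x : int) : nat := absz ((x - 1) %% N%:Z)%Z.
Definition ol (N : nat) (x : int) : int := - ((x - 1) %/ N%:Z)%Z.

Definition Lstrict (n : nat) (k : expo n) : Prop :=
  forall i j : 'I_n, (i < j)%N -> k j < k i.

Definition domlt (n : nat) (l k : expo n) : Prop :=
  [/\ l != k, \sum_(i : 'I_n) l i = \sum_(i : 'I_n) k i &
      forall p : nat, (p <= n)%N ->
        \sum_(i : 'I_n | (i < p)%N) l i <= \sum_(i : 'I_n | (i < p)%N) k i].

Definition uhat (N n : nat) (k : expo n) : Sp N n :=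
  \sum_(w : 'S_n) ((-1) ^+ odd_perm w) *:
     \sum_(c : colr N n | [forall i, (c i : nat) == ul N (k (w i))])
        << ([ffun i => ol N (k (w i))], c) >>.

Definition common_eigen (N n : nat) (beta : RR) (X : Sp N n) : Prop :=
  forall m : nat, (1 <= m <= N)%N ->
  forall s : nat, exists lam : CC, Aser beta m s X = lam *: X.

Definition triangular (N n : nat) (k : expo n) (X : Sp N n) : Prop :=
  exists (ls : seq (expo n)) (c : expo n -> CC),
    (forall l, l \in ls -> Lstrict l /\ domlt l k) /\
    X = uhat N k + \sum_(l <- ls) c l *: uhat N l.

Definition is_X (N n : nat) (beta : RR) (k : expo n) (X : Sp N n) : Prop :=
  triangular k X /\ common_eigen beta X.

From Pilot Require Import Defs.
From mathcomp Require Import all_boot all_order all_algebra all_fingroup.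
From mathcomp Require Import complex.
From mathcomp Require Import Rstruct.
From mathcomp.multinomials Require Import monalg.
From mathcomp Require Import ring.

Set Implicit Arguments.
Unset Strict Implicit.
Unset Printing Implicit Defensive.

Import Order.TTheory GRing.Theory Num.Theory.
Local Open Scope ring_scope.

(* Expanding T_ab(u) = L^(1)(u) ... L^(n)(u) in u^-1, every factor has constant term
   the identity, so the u^-1 coefficient of T_ab is sum_i E^(i)_ba; in A_m(u) every
   non-identity permutation contributes at least two factors without constant term,
   so the u^-1 coefficient of A_m is sum_(r < m) T^(1)_rr.  Hence each colour count
   S_a = sum_i E^(i)_aa acts on X = X_k by a scalar.  S_a is diagonal on the monomial
   basis and X has coefficient 1 on the leading monomial of hat u_k, so every monomial
   z^m (x) v_c of X has the colour counts of k, which is (i).  Such a monomial occurs in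
   some hat u_l with l = k or l < k, hence sum_i l_i = sum_i k_i; as
   sum_i l_i = sum_i (c_i + 1) - N sum_i m_i and the first sum only depends on the
   colour counts, sum_i m_i = |ol k|, which is (ii). *)

Lemma ul_intE N x : (0 < N)%N -> (ul N x)%:Z = ((x - 1) %% N%:Z)%Z.
Proof.
move=> N_gt0; apply: gez0_abs; apply: modz_ge0.
by rewrite eqz_nat -lt0n.
Qed.

Lemma ul_lt N x : (0 < N)%N -> (ul N x < N)%N.
Proof. by move=> N_gt0; rewrite -ltz_nat ul_intE // ltz_pmod // ltz_nat. Qed.

Lemma ul_olE N x : (0 < N)%N -> x = (ul N x)%:Z + 1 - N%:Z * ol N x.
Proof.
move=> N_gt0; rewrite ul_intE // /ol mulrN opprK.
apply: (addIr (-1)); rewrite [in LHS](divz_eq (x - 1) N%:Z); ring.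
Qed.

Lemma ulK N (a : 'I_N) (b : int) : ul N ((a : nat)%:Z + 1 - N%:Z * b) = a.
Proof.
have N_gt0 : (0 < N)%N by apply: leq_ltn_trans (ltn_ord a).
apply/eqP; rewrite -eqz_nat ul_intE //.
have -> : (a : nat)%:Z + 1 - N%:Z * b - 1 = - b * N%:Z + (a : nat)%:Z by ring.
rewrite modzMDl modz_small //.
by rewrite ltz_nat ltn_ord.
Qed.

Lemma olK N (a : 'I_N) (b : int) : ol N ((a : nat)%:Z + 1 - N%:Z * b) = b.
Proof.
have N_gt0 : (0 < N)%N by apply: leq_ltn_trans (ltn_ord a).
rewrite /ol.
have -> : (a : nat)%:Z + 1 - N%:Z * b - 1 = - b * N%:Z + (a : nat)%:Z by ring.
rewrite divzMDl ?divz_small ?addr0 ?opprK //.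
  by rewrite ltz_nat ltn_ord.
by rewrite eqz_nat -lt0n.
Qed.

Lemma card_ltn_ord n (i : 'I_n) : #|[set j : 'I_n | (j < i)%N]| = i.
Proof.
rewrite cardsE -sum1_card.
by rewrite -(big_ord_widen n (fun=> 1%N) (ltnW (ltn_ord i))) sum1_card card_ord.
Qed.

Lemma card_strict_gt n (k : expo n) (i : 'I_n) : Lstrict k ->
  #|[set j : 'I_n | k i < k j]| = i.
Proof.
move=> k_strict; rewrite -card_ltn_ord; apply: eq_card => j; rewrite !inE.
case: (ltngtP j i) => [/k_strict -> // | /k_strict/ltW | /val_inj ->].
  by rewrite leNgt => /negbTE.
by rewrite ltxx.
Qed.

Lemma perm_strict_eq n (l k : expo n) (w : 'S_n) : Lstrict l -> Lstrict k ->
  (forall i, l (w i) = k i) -> w = 1%g.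
Proof.
move=> l_strict k_strict lwk; apply/permP => i; rewrite perm1; apply: val_inj => /=.
rewrite -(card_strict_gt (w i) l_strict) -(card_strict_gt i k_strict).
rewrite -(card_preimset _ (@perm_inj _ w)); apply: eq_card => j.
by rewrite !inE !lwk.
Qed.

Lemma perm_on_moved_count (T : finType) (P : pred T) (w : {perm T}) :
  perm_on [set x | P x] w -> w != 1%g ->
  (1 < count (predC (fun x => x == w x)) [seq x <- enum T | P x])%N.
Proof.
move=> w_on w_neq1.
have [x wx_neq] : exists x, w x != x.
  apply/existsP; apply: contraR w_neq1 => /existsPn w_fix; apply/eqP/permP => x.
  by rewrite perm1; apply/eqP; move: (w_fix x); rewrite negbK.
have moved_P y : w y != y -> P y.
  by move=> wy_neq; apply: contraR wy_neq => Py; rewrite (out_perm w_on) // inE.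
have wwx_neq : w (w x) != w x by apply: contra wx_neq => /eqP/perm_inj ->.
rewrite -size_filter -[1%N]/(size [:: x; w x]).-1.
apply: (@uniq_leq_size _ [:: x; w x]) => [|y]; first by rewrite /= inE andbT eq_sym wx_neq.
rewrite !inE => /orP[] /eqP ->; rewrite !mem_filter -enumT mem_enum andbT /= eq_sym.
  by rewrite wx_neq moved_P.
by rewrite wwx_neq moved_P.
Qed.

Section Series.
Variables N n : nat.
Implicit Types (f : Sp N n) (F G : ser N n) (M : mser N n).

Lemma lext0 (phi : Kidx N n -> Sp N n) : lext phi 0 = 0.
Proof. by rewrite /lext msupp0 big_nil. Qed.

Lemma dop0 beta i : dop beta i (0 : Sp N n) = 0.
Proof.
have Qop0 a b : Qop a b (0 : Sp N n) = 0 by apply: lext0.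
have zdz0 : zdz i (0 : Sp N n) = 0 by apply: lext0.
rewrite /dop zdz0 !scaler0 add0r.
rewrite [X in _ + X - _]big1; last by move=> j _; exact: Qop0.
rewrite [X in _ - X]big1; last by move=> j _; exact: Qop0.
by rewrite subr0 addr0.
Qed.

Lemma sermul_coef0 F G f : sermul F G 0%N f = F 0%N (G 0%N f).
Proof. by rewrite /sermul big_ord1 subnn. Qed.

Lemma sermul_coef1 F G f :
  sermul F G 1%N f = F 0%N (G 1%N f) + F 1%N (G 0%N f).
Proof. by rewrite /sermul big_ord_recr big_ord1 /= subn0 subnn. Qed.

(* The coefficients are arbitrary maps, not linear ones, hence the second clause. *)
Definition monic_mser M :=
  (forall a b f, M a b 0%N f = if a == b then f else 0) /\
  (forall a b s, M a b s 0 = 0).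

Lemma mone_monic : monic_mser (@Defs.mone N n).
Proof.
split=> [a b f|a b s]; rewrite /Defs.mone; case: (a == b) => //.
by rewrite /serone; case: (s == 0%N).
Qed.

Lemma Lser_monic beta c i : monic_mser (fun a b => Lser beta c i a b).
Proof.
split=> [a b f|a b [|s]] /=; [by [] | by case: (a == b) |].
have Eop0 : Eop i b a (0 : Sp N n) = 0 by apply: lext0.
rewrite Eop0; elim: s => [|s IHs] /=; first by [].
by rewrite IHs dop0 scaler0 subr0 oppr0.
Qed.

Lemma mmul_monic M M' : monic_mser M -> monic_mser M' -> monic_mser (Defs.mmul M M').
Proof.
move=> [M_0 M_at0] [M'_0 M'_at0]; split=> [a b f|a b s]; rewrite /Defs.mmul.
  under eq_bigr => c _ do rewrite sermul_coef0 M_0 M'_0.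
  rewrite (bigD1 b) //= eqxx big1 ?addr0 // => c /negbTE ->.
  by case: (a == c).
by rewrite big1 // => c _; rewrite /sermul big1 // => r _; rewrite M'_at0 M_at0.
Qed.

Lemma mmul_coef1 M M' a b f : monic_mser M -> monic_mser M' ->
  Defs.mmul M M' a b 1%N f = M a b 1%N f + M' a b 1%N f.
Proof.
move=> [M_0 M_at0] [M'_0 M'_at0]; rewrite /Defs.mmul.
under eq_bigr => c _ do rewrite sermul_coef1 M_0 M'_0.
rewrite big_split /= addrC; congr (_ + _).
  by rewrite (bigD1 b) //= eqxx big1 ?addr0 // => c /negbTE ->; apply: M_at0.
by rewrite (bigD1 a) //= eqxx big1 ?addr0 // => c; rewrite eq_sym => /negbTE ->.
Qed.

Section TransferMatrix.
Variables (beta : RR) (c : nat).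

Let Lprod (s : seq 'I_n) : mser N n :=
  foldr (fun i acc => Defs.mmul (fun a b => Lser beta c i a b) acc) (@Defs.mone N n) s.

Lemma Lprod_monic s : monic_mser (Lprod s).
Proof.
elim: s => [|i s IHs] /=; first exact: mone_monic.
exact: (mmul_monic (Lser_monic _ _ _) IHs).
Qed.

Lemma Lprod_coef1 s a b f : Lprod s a b 1%N f = \sum_(i <- s) Eop i b a f.
Proof.
elim: s => [|i s IHs] /=; first by rewrite big_nil /Defs.mone; case: (a == b).
rewrite mmul_coef1; [by rewrite IHs big_cons | exact: Lser_monic | exact: Lprod_monic].
Qed.

Lemma Tser_monic : monic_mser (Tser beta c).
Proof. exact: Lprod_monic. Qed.

Lemma Tser_coef1 a b f : Tser beta c a b 1%N f = \sum_(i <- enum 'I_n) Eop i b a f.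
Proof. exact: Lprod_coef1. Qed.

End TransferMatrix.

Section DiagonalLeadProduct.
Variables (T : 'I_N -> ser N n) (fixed : pred 'I_N).
Hypothesis T_coef0 : forall r f, T r 0%N f = if fixed r then f else 0.
Hypothesis T_at0 : forall r s, T r s 0 = 0.

Let Tprod (rs : seq 'I_N) : ser N n :=
  foldr (fun r acc => sermul (T r) acc) (@serone N n) rs.

Lemma Tprod_coef0 rs f : Tprod rs 0%N f = if all fixed rs then f else 0.
Proof.
elim: rs => [|r rs IHrs] //=.
by rewrite sermul_coef0 T_coef0 IHrs; case: (fixed r); case: (all fixed rs).
Qed.

Lemma Tprod_coef1 rs f : all fixed rs -> Tprod rs 1%N f = \sum_(r <- rs) T r 1%N f.
Proof.
elim: rs => [|r rs IHrs] /=; first by rewrite big_nil.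
move=> /andP[fixed_r fixed_rs].
by rewrite sermul_coef1 T_coef0 fixed_r Tprod_coef0 fixed_rs IHrs // big_cons addrC.
Qed.

(* Each factor whose leading coefficient vanishes costs one power of u^-1. *)
Lemma Tprod_coef1_eq0 rs f : (1 < count (predC fixed) rs)%N -> Tprod rs 1%N f = 0.
Proof.
elim: rs => [|r rs IHrs] //=; rewrite sermul_coef1 T_coef0 Tprod_coef0.
have not_all_fixed : (0 < count (predC fixed) rs)%N -> all fixed rs = false.
  by move=> cnt_gt0; apply/negbTE; rewrite -has_predC has_count.
case: (fixed r) => /= [cnt_gt1|]; last rewrite add1n ltnS => cnt_gt0.
  by rewrite IHrs // not_all_fixed ?T_at0 ?addr0 // (ltn_trans _ cnt_gt1).
by rewrite not_all_fixed // T_at0 add0r.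
Qed.

End DiagonalLeadProduct.

Lemma Aser_coef1 beta m f :
  Aser beta m 1%N f =
  \sum_(r <- [seq r : 'I_N <- enum 'I_N | (r < m)%N])
     \sum_(i <- enum 'I_n) Eop i r r f.
Proof.
have Tw_coef0 (w : {perm 'I_N}) (r : 'I_N) (g : Sp N n) :
    Tser beta r r (w r) 0%N g = if r == w r then g else 0.
  exact: (Tser_monic beta r).1.
have Tw_at0 (w : {perm 'I_N}) (r : 'I_N) (s : nat) : Tser beta r r (w r) s (0 : Sp N n) = 0.
  exact: (Tser_monic beta r).2.
rewrite /Aser (bigD1 1%g) ?perm_on1 //= big1 ?addr0 => [|w /andP[w_on w_neq1]].
  rewrite odd_perm1 expr0 scale1r (Tprod_coef1 (Tw_coef0 1%g)).
    by apply: eq_bigr => r _; rewrite Tser_coef1 perm1.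
  by apply/allP => r _; rewrite perm1.
rewrite (Tprod_coef1_eq0 (Tw_coef0 w) (Tw_at0 w)) ?scaler0 //.
exact: perm_on_moved_count.
Qed.

Lemma common_eigen_Eop beta (X : Sp N n) : common_eigen beta X ->
  forall a : 'I_N, exists mu : CC, \sum_(i <- enum 'I_n) Eop i a a X = mu *: X.
Proof.
move=> X_eigen.
pose S (r : 'I_N) := \sum_(i <- enum 'I_n) Eop i r r X.
have S_partial m : (m <= N)%N ->
    exists lam : CC, \sum_(r : 'I_N | (r < m)%N) S r = lam *: X.
  case: m => [|m] m_le.
    by exists 0; rewrite big_pred0 ?scale0r // => r; rewrite ltn0.
  have [lam A_eigen] := X_eigen m.+1 m_le 1%N.
  by exists lam; rewrite -A_eigen Aser_coef1 big_filter big_enum_cond.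
move=> a.
have [lam1 S1] := S_partial a.+1 (ltn_ord a).
have [lam0 S0] := S_partial a (ltnW (ltn_ord a)).
exists (lam1 - lam0); rewrite scalerBl -S1 -S0 (bigD1 a) //=.
rewrite (eq_bigl (fun r : 'I_N => (r < a)%N)) ?addrK // => r.
by rewrite ltnS -val_eqE /=; case: (ltngtP r a).
Qed.

End Series.

Lemma eigen_coef (K : choiceType) (R : idomainType) (lam : K -> R)
    (f g : {malg R[K]}) (mu : R) x :
  (forall y, g@_y = lam y * f@_y) -> g = mu *: f -> f@_x != 0 -> lam x = mu.
Proof.
by move=> g_coef g_eigen fx_neq0; apply: (mulIf fx_neq0); rewrite -g_coef g_eigen mcoeffZ.
Qed.

Section MonomialBasis.
Variables N n : nat.
Implicit Types (f : Sp N n) (x : Kidx N n).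

Definition colour_count (c : colr N n) (a : 'I_N) : nat := #|[set i | c i == a]|.

(* kseq inverts the encoding k_i |-> (ol k_i, ul k_i) of the monomials of hat u_k. *)
Definition kseq x : expo n := [ffun i => (x.2 i : nat)%:Z + 1 - N%:Z * x.1 i].

Definition lead_idx (N_gt0 : (0 < N)%N) (k : expo n) : Kidx N n :=
  ([ffun i => ol N (k i)], [ffun i => Ordinal (ul_lt (k i) N_gt0)]).

Lemma kseq_inj : injective kseq.
Proof.
move=> [m c] [m' c'] /ffunP kseq_eq.
have kseq_eq_i i : (c i : nat)%:Z + 1 - N%:Z * m i = (c' i : nat)%:Z + 1 - N%:Z * m' i.
  by have := kseq_eq i; rewrite !ffunE.
congr (_, _); apply/ffunP => i.
  by rewrite -(olK (c i) (m i)) kseq_eq_i olK.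
by apply: val_inj; rewrite /= -(ulK (c i) (m i)) kseq_eq_i ulK.
Qed.

Lemma kseq_lead_idx N_gt0 k : kseq (lead_idx N_gt0 k) = k.
Proof. by apply/ffunP => i; rewrite !ffunE /= -ul_olE. Qed.

Lemma lead_idx_eqE N_gt0 k x : (lead_idx N_gt0 k == x) = (k == kseq x).
Proof. by rewrite -(inj_eq kseq_inj) kseq_lead_idx. Qed.

Lemma sum_kseq x :
  \sum_i kseq x i = \sum_i ((x.2 i : nat)%:Z + 1) - N%:Z * \sum_i x.1 i.
Proof. by rewrite mulr_sumr -sumrB; apply: eq_bigr => i _; rewrite ffunE. Qed.

Lemma sum_colours (c : colr N n) :
  \sum_i ((c i : nat)%:Z + 1) = \sum_(a : 'I_N) ((a : nat)%:Z + 1) *+ colour_count c a.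
Proof.
rewrite (partition_big c predT) //=; apply: eq_bigr => a _.
rewrite (eq_bigr (fun _ => (a : nat)%:Z + 1)) => [|i /eqP -> //].
by rewrite sumr_const /colour_count cardsE.
Qed.

Lemma lext_diag_coef (lam : Kidx N n -> CC) f x :
  (lext (fun y => lam y *: << y >>) f)@_x = lam x * f@_x.
Proof.
rewrite /lext raddf_sum /=.
under eq_bigr => y _ do rewrite !mcoeffZ mcoeffU mulrb.
case: (msuppP f x) => [x_supp|x_nsupp].
  rewrite (big_rem x) //= eqxx mulr1 mulrC big_seq big1 ?addr0 // => y y_rem.
  case: eqP y_rem => [->|]; last by rewrite !mulr0.
  by rewrite mem_rem_uniqF // finmap.fset_uniq.
rewrite mulr0 big_seq big1 // => y y_supp; case: eqP y_supp => [->|]; last by rewrite !mulr0.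
by move=> x_supp; rewrite x_supp in x_nsupp.
Qed.

Lemma sum_Eop_coef a f x :
  (\sum_(i <- enum 'I_n) Eop i a a f)@_x = (colour_count x.2 a)%:R * f@_x.
Proof.
have Eop_diag i : Eop i a a f = lext (fun y => (y.2 i == a)%:R *: << y >>) f.
  rewrite /Eop /lext; apply: eq_bigr => -[m c] _ /=; congr (_ *: _).
  case: eqP => [ci|_]; last by rewrite scale0r.
  rewrite scale1r; congr << (_, _) >>.
  by apply/ffunP => j; rewrite /setf ffunE; case: eqP => // ->.
rewrite raddf_sum /=; under eq_bigr => i _ do rewrite Eop_diag lext_diag_coef.
rewrite -mulr_suml big_enum /= -natr_sum /colour_count -sum1_card [in RHS]big_mkcond.
by congr (_%:R * _); apply: eq_bigr => i _; rewrite inE; case: (x.2 i == a).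
Qed.

Lemma sum_zdz_coef f x : (\sum_i zdz i f)@_x = (\sum_i x.1 i)%:~R * f@_x.
Proof.
rewrite raddf_sum /= mulrz_sumr mulr_suml.
by apply: eq_bigr => i _; rewrite lext_diag_coef.
Qed.

Lemma uhat_lead_idx (N_gt0 : (0 < N)%N) l :
  uhat N l = \sum_(w : 'S_n) (-1) ^+ odd_perm w *: << lead_idx N_gt0 [ffun i => l (w i)] >>.
Proof.
apply: eq_bigr => w _; congr (_ *: _).
rewrite (big_pred1 (lead_idx N_gt0 [ffun i => l (w i)]).2) => [|c].
  by congr << _ >>; congr (_, _); apply/ffunP => i; rewrite !ffunE.
rewrite !inE; apply/forallP/eqP => [c_eq|-> i]; last by rewrite !ffunE.
by apply/ffunP => i; apply: val_inj; rewrite !ffunE /=; apply/eqP.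
Qed.

Lemma uhat_coef (N_gt0 : (0 < N)%N) l x :
  (uhat N l)@_x = \sum_(w : 'S_n) (-1) ^+ odd_perm w * ([ffun i => l (w i)] == kseq x)%:R.
Proof.
rewrite (uhat_lead_idx N_gt0) raddf_sum /=; apply: eq_bigr => w _.
by rewrite mcoeffZ mcoeffU lead_idx_eqE.
Qed.

Lemma uhat_lead_coef (N_gt0 : (0 < N)%N) l k : Lstrict l -> Lstrict k ->
  (uhat N l)@_(lead_idx N_gt0 k) = (l == k)%:R.
Proof.
move=> l_strict k_strict.
rewrite (uhat_coef N_gt0) kseq_lead_idx (bigD1 1%g) //= odd_perm1 expr0 mul1r.
rewrite big1 ?addr0 => [|w w_neq1].
  by congr (_%:R); congr (_ == _); apply/ffunP => i; rewrite ffunE perm1.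
case: eqP => [/ffunP lw_eq|_]; last by rewrite mulr0.
have lwk i : l (w i) = k i by have := lw_eq i; rewrite ffunE.
by rewrite (perm_strict_eq l_strict k_strict lwk) eqxx in w_neq1.
Qed.

Lemma uhat_supp_sum (N_gt0 : (0 < N)%N) l x :
  (uhat N l)@_x != 0 -> \sum_i kseq x i = \sum_i l i.
Proof.
rewrite (uhat_coef N_gt0); apply: contraTeq => sum_neq; rewrite negbK; apply/eqP.
apply: big1 => w _; case: eqP => [lw_eq|_]; last by rewrite mulr0.
move: sum_neq; rewrite -lw_eq [X in _ != X](reindex_inj (@perm_inj _ w)) /=.
by under eq_bigr do rewrite ffunE; rewrite eqxx.
Qed.

End MonomialBasis.

Section Eigenvector.
Variables (N n : nat) (beta : RR) (k : expo n) (X : Sp N n).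
Hypotheses (N_gt0 : (0 < N)%N) (k_strict : Lstrict k) (X_is : is_X beta k X).

Lemma X_coef_lead : X@_(lead_idx N_gt0 k) = 1.
Proof.
have [[ls [c [ls_lt ->]]] _] := X_is.
rewrite mcoeffD uhat_lead_coef // eqxx raddf_sum /= big_seq big1 ?addr0 // => l l_in.
have [l_strict [l_neq _ _]] := ls_lt l l_in.
by rewrite mcoeffZ uhat_lead_coef // (negbTE l_neq) mulr0.
Qed.

Lemma X_supp_sum x : X@_x != 0 -> \sum_i kseq x i = \sum_i k i.
Proof.
have [[ls [c [ls_lt ->]]] _] := X_is.
have uhat_coef0 (l : expo n) : \sum_i kseq x i != \sum_i l i -> (uhat N l)@_x = 0.
  by move=> sum_neq; apply/eqP; apply: contraNT sum_neq => /(uhat_supp_sum N_gt0)/eqP.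
apply: contraTeq => sum_neq; rewrite negbK; apply/eqP.
rewrite mcoeffD uhat_coef0 // add0r raddf_sum /= big_seq big1 // => l l_in.
have [_ [_ l_sum _]] := ls_lt l l_in.
by rewrite mcoeffZ uhat_coef0 ?mulr0 ?l_sum.
Qed.

Lemma X_supp_colour_count x a :
  X@_x != 0 -> colour_count x.2 a = colour_count (lead_idx N_gt0 k).2 a.
Proof.
move=> x_supp; have [_ X_eigen] := X_is.
have [mu S_eigen] := common_eigen_Eop X_eigen a.
have count_eq y : X@_y != 0 -> (colour_count y.2 a)%:R = mu :> CC.
  exact: (eigen_coef (sum_Eop_coef a X) S_eigen).
have lead_supp : X@_(lead_idx N_gt0 k) != 0 by rewrite X_coef_lead oner_neq0.
by apply/eqP; rewrite -(eqr_nat CC) (count_eq _ x_supp) (count_eq _ lead_supp).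
Qed.

Lemma X_supp_degree x : X@_x != 0 -> \sum_i x.1 i = \sum_i ol N (k i).
Proof.
move=> x_supp.
have colours_eq :
    \sum_i ((x.2 i : nat)%:Z + 1) = \sum_i (((lead_idx N_gt0 k).2 i : nat)%:Z + 1).
  by rewrite !sum_colours; apply: eq_bigr => a _; rewrite X_supp_colour_count.
have sum_eq := X_supp_sum x_supp.
rewrite -(kseq_lead_idx N_gt0 k) !sum_kseq colours_eq in sum_eq.
have N_neq0 : N%:Z != 0 by rewrite eqz_nat -lt0n.
move/addrI/oppr_inj/(mulfI N_neq0): sum_eq ->.
by apply: eq_bigr => i _; rewrite ffunE.
Qed.

End Eigenvector.

Unset Implicit Arguments.

Theorem proposition13 (N n : nat) (beta : RR) (k : expo n) (X : Sp N n) :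
  (1 <= N)%N -> (1 <= n)%N -> 0 < beta -> Lstrict k ->
  is_X beta k X ->
  (forall a : 'I_N,
      T1 beta a a X = (#|[set i : 'I_n | ul N (k i) == a]|)%:R *: X) /\
  \sum_(i : 'I_n) zdz i X = (\sum_(i : 'I_n) ol N (k i))%:~R *: X.
Proof.
(* Only the u^-1 coefficients enter, so neither n >= 1 nor beta > 0 is needed. *)
move=> N_gt0 _ _ k_strict X_is; split.
  move=> a; apply/malgP => x; rewrite /T1 Tser_coef1 sum_Eop_coef mcoeffZ.
  have [->|x_supp] := eqVneq X@_x 0; first by rewrite !mulr0.
  rewrite (X_supp_colour_count N_gt0 k_strict X_is a x_supp); congr (_%:R * _).
  by apply: eq_card => i; rewrite !inE ffunE -val_eqE.
apply/malgP => x; rewrite sum_zdz_coef mcoeffZ.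
have [->|x_supp] := eqVneq X@_x 0; first by rewrite !mulr0.
by rewrite (X_supp_degree N_gt0 k_strict X_is x_supp).
Qed.
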